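(* Let $C$ be a boundedly compact subset of a metric space $(X,d)$, $T:C\to C$ continuous with $F:=\mathrm{Fix}(T)\ne\emptyset$, and $G,H:\mathbb{R}_+\to\mathbb{R}_+$ satisfying properties (G) and (H). Assume that the sequence $(x_n)$ in $C$ is bounded, $(G,H)$-Fej\'er monotone with respect to $F$, and has approximate fixed points. Then $(x_n)$ converges to a fixed point of $T$. The same conclusion holds if the continuity of $T$ is replaced by the assumption that $F$ is explicitly closed with respect to the representation $\tilde F_k:=\{x\in C\mid d(x,Tx)\le\frac1{k+1}\}$.
   Context: $C$ is boundedly compact if every bounded sequence in $C$ has a subsequence converging in $C$. Property (G): $a_n\to0\Rightarrow G(a_n)\to0$; property (H): $H(a_n)\to0\Rightarrow a_n\to0$ (for all sequences in $\mathbb{R}_+$). $(x_n)$ is $(G,H)$-Fej\'er monotone w.r.t. $F$ if $H(d(x_{n+m},p))\le G(d(x_n,p))$ for all $n,m\in\mathbb{N}$, $p\in F$. $(x_n)$ has approximate fixed points if for every $k$ there is $N$ with $d(x_N,Tx_N)\le\frac1{k+1}$. With $AF_k:=\bigcap_{l\le k}\tilde F_l$, $F$ is explicitly closed if for every $p\in C$: if $AF_M\cap\overline B(p,1/(N+1))\ne\emptyset$ for all $N,M$, then $p\in F$. *)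

From Stdlib Require Export Reals.
Open Scope R_scope.

Section Metric.
Context {X : Type}.

Definition is_metric (d : X -> X -> R) : Prop :=
  (forall x y, 0 <= d x y) /\
  (forall x y, d x y = 0 <-> x = y) /\
  (forall x y, d x y = d y x) /\
  (forall x y z, d x z <= d x y + d y z).

Definition converges_to (d : X -> X -> R) (x : nat -> X) (p : X) : Prop :=
  forall eps, 0 < eps -> exists N, forall n, (N <= n)%nat -> d (x n) p < eps.

Definition bounded_seq (d : X -> X -> R) (x : nat -> X) : Prop :=
  exists (q : X) (M : R), forall n, d (x n) q <= M.

Definition boundedly_compact (d : X -> X -> R) (C : X -> Prop) : Prop :=
  forall x : nat -> X, (forall n, C (x n)) -> bounded_seq d x ->
  exists (phi : nat -> nat) (p : X),
    (forall n, (phi n < phi (S n))%nat) /\ C p /\ converges_to d (fun n => x (phi n)) p.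

Definition continuous_on (d : X -> X -> R) (C : X -> Prop) (T : X -> X) : Prop :=
  forall x, C x -> forall eps, 0 < eps -> exists delta, 0 < delta /\
    forall y, C y -> d x y < delta -> d (T x) (T y) < eps.

Definition Fix (C : X -> Prop) (T : X -> X) (p : X) : Prop := C p /\ T p = p.

Definition prop_G (G : R -> R) : Prop :=
  forall a : nat -> R, (forall n, 0 <= a n) -> Un_cv a 0 -> Un_cv (fun n => G (a n)) 0.

Definition prop_H (H : R -> R) : Prop :=
  forall a : nat -> R, (forall n, 0 <= a n) -> Un_cv (fun n => H (a n)) 0 -> Un_cv a 0.

Definition nonneg_on_nonneg (G : R -> R) : Prop :=
  forall t, 0 <= t -> 0 <= G t.

Definition GH_Fejer_monotone (d : X -> X -> R) (G H : R -> R) (F : X -> Prop)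
  (x : nat -> X) : Prop :=
  forall n m p, F p -> H (d (x (n + m)%nat) p) <= G (d (x n) p).

Definition has_approx_fixed_points (d : X -> X -> R) (T : X -> X) (x : nat -> X) : Prop :=
  forall k : nat, exists N, d (x N) (T (x N)) <= 1 / (INR k + 1).

Definition Ftilde (d : X -> X -> R) (C : X -> Prop) (T : X -> X) (k : nat) (y : X) : Prop :=
  C y /\ d y (T y) <= 1 / (INR k + 1).

Definition AF (d : X -> X -> R) (C : X -> Prop) (T : X -> X) (k : nat) (y : X) : Prop :=
  forall l, (l <= k)%nat -> Ftilde d C T l y.

Definition cball (d : X -> X -> R) (p : X) (r : R) (y : X) : Prop := d p y <= r.

Definition explicitly_closed (d : X -> X -> R) (C : X -> Prop) (T : X -> X)
  (F : X -> Prop) : Prop :=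
  forall p, C p ->
    (forall N M : nat, exists y, AF d C T M y /\ cball d p (1 / (INR N + 1)) y) -> F p.

End Metric.

(* A subsequence of approximate fixed points has, by bounded compactness, a
   limit p in C; continuity of T (or explicit closedness of Fix T, tested
   against the tail of that subsequence) makes p a fixed point.  Property (G)
   turns d(x_{n_k}, p) -> 0 into G(d(x_{n_k}, p)) -> 0, Fejér monotonicity
   bounds H(d(x_n, p)) by these values for all later n, and property (H)
   gives d(x_n, p) -> 0. *)
From Stdlib Require Import Reals.
From Stdlib Require Import Lra Lia ClassicalEpsilon.
Open Scope R_scope.

Lemma inv_INR_succ_pos (k : nat) : 0 < 1 / (INR k + 1).
Proof.
  unfold Rdiv; rewrite Rmult_1_l; apply Rinv_0_lt_compat.
  pose proof (pos_INR k); lra.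
Qed.

Lemma inv_INR_succ_le (a b : nat) : (a <= b)%nat -> 1 / (INR b + 1) <= 1 / (INR a + 1).
Proof.
  intro hab; unfold Rdiv; rewrite !Rmult_1_l; apply Rinv_le_contravar.
  - pose proof (pos_INR a); lra.
  - apply le_INR in hab; lra.
Qed.

Lemma inv_INR_succ_lt (eps : R) : 0 < eps -> exists K : nat, 1 / (INR K + 1) < eps.
Proof.
  intro heps; destruct (archimed_cor1 eps heps) as [K [hK hK0]]; exists K.
  eapply Rle_lt_trans; [| exact hK].
  unfold Rdiv; rewrite Rmult_1_l; apply Rinv_le_contravar.
  - apply lt_0_INR; lia.
  - lra.
Qed.

Lemma strict_mono_ge_id (phi : nat -> nat) :
  (forall n, (phi n < phi (S n))%nat) -> forall k, (k <= phi k)%nat.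
Proof. intros hphi k; induction k; [lia |]; specialize (hphi k); lia. Qed.

Section FejerConvergence.

Variables (X : Type) (d : X -> X -> R) (C : X -> Prop) (T : X -> X).
Hypothesis d_metric : is_metric d.

Let d_nonneg : forall x y, 0 <= d x y.
Proof. apply d_metric. Qed.
Let d_eq0 : forall x y, d x y = 0 <-> x = y.
Proof. apply d_metric. Qed.
Let d_sym : forall x y, d x y = d y x.
Proof. apply d_metric. Qed.
Let d_triangle : forall x y z, d x z <= d x y + d y z.
Proof. apply d_metric. Qed.

Lemma converges_to_Un_cv (x : nat -> X) (p : X) :
  converges_to d x p <-> Un_cv (fun n => d (x n) p) 0.
Proof.
  unfold Un_cv, R_dist.
  split; intros hx eps heps; destruct (hx eps heps) as [N hN]; exists N;
    intros n hn; specialize (hN n ltac:(lia));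
    rewrite Rminus_0_r, Rabs_right in * by (apply Rle_ge, d_nonneg); exact hN.
Qed.

Lemma approx_fixed_subseq_limit (x : nat -> X) :
  boundedly_compact d C -> (forall n, C (x n)) -> bounded_seq d x ->
  has_approx_fixed_points d T x ->
  exists (idx : nat -> nat) (p : X),
    C p /\ converges_to d (fun k => x (idx k)) p /\
    forall k, d (x (idx k)) (T (x (idx k))) <= 1 / (INR k + 1).
Proof.
  intros hC Cx [q [M hM]] hafp.
  destruct (choice _ hafp) as [f hf].
  destruct (hC (fun k => x (f k))) as [phi [p [hphi [Cp hp]]]].
  - intro k; apply Cx.
  - exists q, M; intro k; apply hM.
  - exists (fun k => f (phi k)), p; repeat split; [exact Cp | exact hp |].
    intro k; eapply Rle_trans; [apply hf |].
    apply inv_INR_succ_le, strict_mono_ge_id, hphi.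
Qed.

Section LimitOfApproxFixedPoints.

Variables (z : nat -> X) (p : X).
Hypotheses (Cz : forall k, C (z k)) (Cp : C p) (z_to_p : converges_to d z p).
Hypothesis z_approx : forall k, d (z k) (T (z k)) <= 1 / (INR k + 1).

Lemma approx_fixed_limit_of_continuous : continuous_on d C T -> T p = p.
Proof.
  intro hT; symmetry; apply d_eq0.
  destruct (Req_dec (d p (T p)) 0) as [h0 | hne]; [exact h0 | exfalso].
  set (eps := d p (T p)).
  assert (heps : 0 < eps) by (pose proof (d_nonneg p (T p)); unfold eps in *; lra).
  destruct (hT p Cp (eps / 3)) as [delta [hdelta hTp]]; [lra |].
  destruct (z_to_p (Rmin delta (eps / 3))) as [K1 hK1]; [apply Rmin_pos; lra |].
  destruct (inv_INR_succ_lt (eps / 3)) as [K2 hK2]; [lra |].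
  set (k := max K1 K2).
  assert (hzp : d (z k) p < Rmin delta (eps / 3)) by (apply hK1; unfold k; lia).
  pose proof (Rmin_l delta (eps / 3)); pose proof (Rmin_r delta (eps / 3)).
  assert (hT_zp : d (T p) (T (z k)) < eps / 3) by (apply hTp; [apply Cz | rewrite d_sym; lra]).
  assert (hz_Tz : d (z k) (T (z k)) < eps / 3).
  { pose proof (z_approx k); pose proof (inv_INR_succ_le K2 k ltac:(unfold k; lia)); lra. }
  (* eps = d(p,Tp) <= d(p,z_k) + d(z_k,Tz_k) + d(Tz_k,Tp) < eps *)
  pose proof (d_triangle p (z k) (T p)); pose proof (d_triangle (z k) (T (z k)) (T p)).
  rewrite (d_sym p (z k)), (d_sym (T (z k)) (T p)) in *.
  unfold eps in *; lra.
Qed.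

Lemma approx_fixed_limit_of_explicitly_closed :
  explicitly_closed d C T (Fix C T) -> Fix C T p.
Proof.
  intro hcl; apply hcl; [exact Cp |]; intros N M.
  destruct (z_to_p (1 / (INR N + 1)) (inv_INR_succ_pos N)) as [K hK].
  exists (z (max K M)); split.
  - intros l hl; split; [apply Cz |].
    eapply Rle_trans; [apply z_approx |]; apply inv_INR_succ_le; lia.
  - unfold cball; rewrite d_sym; left; apply hK; lia.
Qed.

End LimitOfApproxFixedPoints.

Lemma GH_Fejer_converges_of_subseq (G H : R -> R) (F : X -> Prop) (x : nat -> X)
    (idx : nat -> nat) (p : X) :
  nonneg_on_nonneg H -> prop_G G -> prop_H H ->
  GH_Fejer_monotone d G H F x -> F p ->
  converges_to d (fun k => x (idx k)) p -> converges_to d x p.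
Proof.
  intros Hnn hG hH hFej Fp hsub; apply converges_to_Un_cv.
  apply hH; [intro; apply d_nonneg |].
  assert (hGsub : Un_cv (fun k => G (d (x (idx k)) p)) 0).
  { apply hG; [intro; apply d_nonneg | apply converges_to_Un_cv, hsub]. }
  intros eps heps; destruct (hGsub eps heps) as [K hK]; exists (idx K); intros n hn.
  specialize (hK K (le_n K)); unfold R_dist in *; rewrite Rminus_0_r in *.
  rewrite Rabs_right by (apply Rle_ge, Hnn, d_nonneg).
  pose proof (hFej (idx K) (n - idx K)%nat p Fp) as hFejK.
  replace (idx K + (n - idx K))%nat with n in hFejK by lia.
  pose proof (Rle_abs (G (d (x (idx K)) p))); lra.
Qed.

End FejerConvergence.

Theorem proposition7p3 (X : Type) (d : X -> X -> R) (C : X -> Prop) (T : X -> X)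
  (G H : R -> R) (x : nat -> X) :
  is_metric d ->
  boundedly_compact d C ->
  (forall y, C y -> C (T y)) ->
  (exists p, Fix C T p) ->
  nonneg_on_nonneg G -> nonneg_on_nonneg H ->
  prop_G G -> prop_H H ->
  (forall n, C (x n)) ->
  bounded_seq d x ->
  GH_Fejer_monotone d G H (Fix C T) x ->
  has_approx_fixed_points d T x ->
  (continuous_on d C T \/ explicitly_closed d C T (Fix C T)) ->
  exists p, Fix C T p /\ converges_to d x p.
Proof.
  intros hd hC _ _ _ Hnn hG hH Cx hbd hFej hafp hT.
  destruct (approx_fixed_subseq_limit X d C T x hC Cx hbd hafp)
    as [idx [p [Cp [hsub happrox]]]].
  assert (Fp : Fix C T p).
  { destruct hT as [hcont | hcl].
    - split; [exact Cp |].
      exact (approx_fixed_limit_of_continuous X d C T hd _ p (fun _ => Cx _) Cp hsub happrox hcont).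
    - exact (approx_fixed_limit_of_explicitly_closed X d C T hd _ p (fun _ => Cx _) Cp hsub happrox hcl). }
  exists p; split; [exact Fp |].
  eapply GH_Fejer_converges_of_subseq; eauto.
Qed.
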